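(* Let $G$ be a loopless multigraph, let $k \geq 1$ be an integer, and let $M$ be a maximal $k$-edge-colorable subgraph of $G$ (maximal with respect to inclusion of edge sets). Let $F = \{v \in V(G) : d_M(v) \leq k - \mu(v)\}$. Then for every $v \in V(G)$ with $d_M(v) < k$, we have $d_F(v) \leq d_M(v)$.
   Context: A proper $k$-edge-coloring of a loopless multigraph is a map $E(G)\to\{1,\dots,k\}$ giving distinct colors to any two distinct edges sharing at least one endpoint; a multigraph is $k$-edge-colorable if it has one. For vertices $v,w$, $\mu(v,w)=\mu_G(v,w)$ is the number of edges joining $v$ and $w$, and $\mu(v)=\mu_G(v)=\max_{w\in V(G)}\mu_G(v,w)$. For $M\subseteq E(G)$ (viewed as a spanning subgraph), $d_M(v)$ is the number of edges of $M$ incident to $v$. For $F\subseteq V(G)$, $d_F(v)=\sum_{w\in F}\mu_G(v,w)$. *)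

(* A finite loopless multigraph is given by a vertex finType V,
   an edge finType E and two endpoint maps src, dst : E -> V (edge e joins
   src e and dst e; orientation is irrelevant). Parallel edges = distinct
   elements of E with the same endpoints. *)
From mathcomp Require Import all_boot.
Set Implicit Arguments. Unset Strict Implicit. Unset Printing Implicit Defensive.

Section MG.
Variables (V E : finType) (src dst : E -> V).

Definition loopless : Prop := forall e : E, src e != dst e.

Definition incident (v : V) (e : E) : bool := (src e == v) || (dst e == v).

Definition adjacent_edges (e f : E) : bool := [exists v, incident v e && incident v f].

(* proper k-edge-coloring of the spanning subgraph with edge set M,
   colours {1..k} represented by 'I_k *)
Definition proper_edge_coloring (k : nat) (M : {set E}) (c : E -> 'I_k) : Prop :=
  forall e f, e \in M -> f \in M -> e != f -> adjacent_edges e f -> c e != c f.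

Definition k_edge_colorable (k : nat) (M : {set E}) : Prop :=
  exists c : E -> 'I_k, proper_edge_coloring M c.

Definition maximal_k_edge_colorable (k : nat) (M : {set E}) : Prop :=
  k_edge_colorable k M /\
  forall M' : {set E}, M \proper M' -> ~ k_edge_colorable k M'.

Definition mult (v w : V) : nat :=
  #|[set e : E | ((src e == v) && (dst e == w)) || ((src e == w) && (dst e == v))]|.

Definition mult_max (v : V) : nat := \max_(w : V) mult v w.

Definition degM (M : {set E}) (v : V) : nat := #|[set e in M | incident v e]|.

Definition degF (F : {set V}) (v : V) : nat := \sum_(w in F) mult v w.

End MG.

From mathcomp Require Import all_boot.
From Stdlib Require Import ClassicalEpsilon.
Set Implicit Arguments. Unset Strict Implicit. Unset Printing Implicit Defensive.

(** Fix a proper colouring c of M and a colour missing at v. Call a sequence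
   of edges at v a fan when each edge is either uncoloured or coloured with a
   colour missing at the far end of an earlier edge. By maximality of M, a colour
   missing at the far end of a fan edge is present at v (otherwise recolour
   along the fan and add an uncoloured edge), and, by a Kempe chain swap, the
   far ends of a fan have pairwise disjoint sets of missing colours. Let S be
   the set of far ends of fans all of whose far ends lie in F. A vertex y of F
   misses at least k - d_M(y) >= mu(v,y) colours; those missing at vertices of
   S are distinct and each is the colour of an edge of M at v whose far end is
   in S or outside F. Every edge from v to F \ S is coloured, so in total
   d_F(v) <= d_M(v). *)

Lemma card_sum_mem (T : finType) (A : {set T}) : #|A| = \sum_x (x \in A).
Proof. by rewrite -sum1_card big_mkcond; apply: eq_bigr => x _; case: (x \in A). Qed.

Definition asbool (P : Prop) : bool :=
  if excluded_middle_informative P then true else false.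

Lemma asboolP (P : Prop) : reflect P (asbool P).
Proof. by rewrite /asbool; case: excluded_middle_informative => H; constructor. Qed.

Lemma last_occurrence (T : eqType) (P : pred T) (R : seq T) x : x \in R -> P x ->
  exists A y B, [/\ R = A ++ y :: B, P y & all (predC P) B].
Proof.
elim: R x => [//|z R IH] x; rewrite in_cons => xzR Px.
have [/hasP[y yR Py]|hP] := boolP (has P R).
  by have [A [y' [B [-> Py' aB]]]] := IH y yR Py; exists (z :: A), y', B.
exists [::], z, R; split => //; last by rewrite all_predC.
by case/orP: xzR => [/eqP <-//|xR]; case/negP: hP; apply/hasP; exists x.
Qed.

Section Multiplicity.
Variables (V E : finType) (src dst : E -> V).

Lemma multC v w : mult src dst v w = mult src dst w v.
Proof. by apply: eq_card => e; rewrite !inE orbC. Qed.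

Lemma leq_mult_max v w : mult src dst v w <= mult_max src dst v.
Proof. exact: (@leq_bigmax _ (mult src dst v)). Qed.

End Multiplicity.

Section PathEnds.
Variables (T : finType) (r : rel T).
Hypothesis r_sym : symmetric r.

Definition rel_on (D : {set T}) := [rel x y | (x \in D) && (y \in D) && r x y].
Definition nbhd_on (D : {set T}) x := [set y in D | r x y].

Lemma path_rel_on_setD1 D v x p :
  path (rel_on D) x p -> v \notin x :: p -> path (rel_on (D :\ v)) x p.
Proof.
elim: p x => [//|y p IH] x /= /andP[/andP[/andP[xD yD] rxy] pp].
rewrite !in_cons !negb_or => /andP[vx /andP[vy vp]].
rewrite /= !inE xD yD rxy eq_sym vx eq_sym vy.
by apply: IH => //; rewrite in_cons negb_or vy.
Qed.

Lemma rel_on_nbhd D x y : rel_on D x y -> y \in nbhd_on D x.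
Proof. by move=> /= /andP[/andP[xD yD] rxy]; rewrite inE yD rxy. Qed.

Lemma rel_on_nbhd_sym D x y : rel_on D x y -> x \in nbhd_on D y.
Proof. by move=> /= /andP[/andP[xD yD] rxy]; rewrite inE r_sym xD rxy. Qed.

Lemma nbhd_on_setD1 D v x : nbhd_on (D :\ v) x \subset nbhd_on D x.
Proof. by apply/subsetP => y; rewrite !inE => /andP[/andP[_ ->] ->]. Qed.

Lemma connect_rel_on_uniq_path D v t : connect (rel_on D) v t -> v != t ->
  exists u q, [/\ rel_on D v u, path (rel_on D) u q, last u q = t & uniq (v :: u :: q)].
Proof.
move=> /connectP [p pp ->] vt.
case: (shortenP pp) vt => [[|u q]] /=; first by rewrite eqxx.
by move=> /andP[vu pq] uq _ _; exists u, q.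
Qed.

Lemma no_three_ends_connected (D : {set T}) (v a b : T) :
  (forall x, x \in D -> #|nbhd_on D x| <= 2) ->
  v \in D -> a \in D -> b \in D -> v != a -> v != b -> a != b ->
  #|nbhd_on D v| <= 1 -> #|nbhd_on D a| <= 1 -> #|nbhd_on D b| <= 1 ->
  connect (rel_on D) v a -> connect (rel_on D) v b -> False.
Proof.
have [n] := ubnP #|D|; elim: n D v a b => [//|n IH] D v a b cD h2 vD aD bD va vb ab hv ha hb.
move=> /(connect_rel_on_uniq_path) /(_ va) [u [q [vu pq lq uq]]].
move=> /(connect_rel_on_uniq_path) /(_ vb) [u' [q' [vu' pq' lq' uq']]].
have {vu'} eu : u' = u.
  by move/card_le1_eqP: hv => /(_ u' u (rel_on_nbhd vu') (rel_on_nbhd vu)).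
subst u'.
(* u is adjacent to v and to the next vertex on a simple path towards the
   other end, so it is not an end itself *)
have not_end t q2 t' : #|nbhd_on D t| <= 1 -> t' != t -> last u q2 = t' ->
    path (rel_on D) u q2 -> uniq (v :: u :: q2) -> u != t.
  move=> ht t't l2 p2 u2; apply/negP => /eqP ut; subst t.
  case: q2 p2 l2 u2 => [|w q2] /=; first by move=> _ e; move: t't; rewrite e eqxx.
  move=> /andP[uw _] _; rewrite !inE !negb_or => /andP[/andP[_ /andP[vw _]] _].
  move/card_le1_eqP: ht => /(_ v w (rel_on_nbhd_sym vu) (rel_on_nbhd uw)) vw1.
  by move: vw; rewrite vw1 eqxx.
have ua : u != a by apply: (not_end a q' b) => //; rewrite eq_sym.
have ub : u != b by apply: (not_end b q a).
have uD : u \in D by move: vu => /= /andP[/andP[_ ->]].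
have uv : u != v by move: (uq) => /= /andP[]; rewrite !inE negb_or eq_sym => /andP[].
have le_nbhd x : #|nbhd_on (D :\ v) x| <= #|nbhd_on D x|.
  exact/subset_leq_card/nbhd_on_setD1.
apply: (IH (D :\ v) u a b) => //.
- by move: cD; rewrite (cardsD1 v D) vD add1n ltnS.
- by move=> x; rewrite !inE => /andP[_ xD]; apply: leq_trans (h2 x xD).
- by rewrite !inE uv.
- by rewrite !inE eq_sym va.
- by rewrite !inE eq_sym vb.
- have : #|nbhd_on D u| <= 2 := h2 u uD.
  rewrite (cardsD1 v (nbhd_on D u)) (rel_on_nbhd_sym vu) add1n ltnS.
  apply: leq_trans; apply: subset_leq_card; apply/subsetP => y.
  by rewrite !inE => /andP[/andP[-> ->] ->].
- exact: leq_trans (le_nbhd a) ha.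
- exact: leq_trans (le_nbhd b) hb.
- apply/connectP; exists q => //; apply: path_rel_on_setD1 => //.
  by move: uq => /= /andP[].
- apply/connectP; exists q' => //; apply: path_rel_on_setD1 => //.
  by move: uq' => /= /andP[].
Qed.

End PathEnds.

Section Colourings.
Variables (V E : finType) (src dst : E -> V) (k : nat) (M : {set E}).

Local Notation inc := (incident src dst).
Local Notation proper := (@proper_edge_coloring V E src dst k).

Definition missing (c : E -> 'I_k) x : {set 'I_k} :=
  [set g | [forall e in M, inc x e ==> (c e != g)]].

Lemma missingP c x g :
  reflect (forall e, e \in M -> inc x e -> c e != g) (g \in missing c x).
Proof.
rewrite inE; apply: (iffP forall_inP) => H e eM.
  by move=> xe; move: (H e eM); rewrite xe.
exact/implyP/H.
Qed.

Lemma missing_eq_setC_colours c x : missing c x = ~: (c @: [set e in M | inc x e]).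
Proof.
apply/setP => g; rewrite !inE; apply/forall_inP/negP => [gx /imsetP[e] | gx e eM].
  by rewrite inE => /andP[eM xe] ge; move: (gx e eM); rewrite xe ge eqxx.
apply/implyP => xe; apply/eqP => ce; apply: gx; apply/imsetP.
by exists e; rewrite ?ce // inE eM xe.
Qed.

Lemma card_missing c x : k - degM src dst M x <= #|missing c x|.
Proof.
rewrite missing_eq_setC_colours; set U := c @: _.
have UC : #|U| + #|~: U| = k by rewrite cardsC card_ord.
by rewrite -[k in k - _]UC leq_subLR leq_add2r leq_imset_card.
Qed.

Lemma proper_incident_inj c x e f : proper M c -> e \in M -> f \in M ->
  inc x e -> inc x f -> c e = c f -> e = f.
Proof.
move=> cp eM fM xe xf cef; apply/eqP; apply: contraT => ef.
have : c e != c f by apply: cp => //; apply/existsP; exists x; rewrite xe xf.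
by rewrite cef eqxx.
Qed.

Lemma proper_edge_coloringS (N N' : {set E}) c :
  N \subset N' -> proper N' c -> proper N c.
Proof. by move=> /subsetP s cp e f eN fN; apply: cp; apply: s. Qed.

Definition joins e x y :=
  ((src e == x) && (dst e == y)) || ((src e == y) && (dst e == x)).

Lemma joins_incident e x y : joins e x y -> inc x e.
Proof. by rewrite /joins /incident => /orP[/andP[-> _]|/andP[_ ->]]; rewrite ?orbT. Qed.

Lemma joins_inj e x y1 y2 : joins e x y1 -> joins e x y2 -> y1 = y2.
Proof.
rewrite /joins => /orP[/andP[/eqP s1 /eqP d1]|/andP[/eqP s1 /eqP d1]]
                   /orP[/andP[/eqP s2 /eqP d2]|/andP[/eqP s2 /eqP d2]]; congruence.
Qed.

Definition kempe (c : E -> 'I_k) a b :=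
  [rel x y | [exists e in M, ((c e == a) || (c e == b)) && joins e x y]].

Lemma kempe_sym c a b : symmetric (kempe c a b).
Proof.
move=> x y; apply/existsP/existsP => -[e /andP[eM /andP[ce j]]];
  by exists e; rewrite eM ce /=; move: j; rewrite /joins orbC.
Qed.

Definition kempe_comp c a b x := [set y | connect (kempe c a b) x y].

Lemma kempe_comp_closed c a b x e : e \in M -> (c e == a) || (c e == b) ->
  (src e \in kempe_comp c a b x) = (dst e \in kempe_comp c a b x).
Proof.
move=> eM ab; rewrite !inE.
have r1 : kempe c a b (src e) (dst e).
  by apply/existsP; exists e; rewrite eM ab /joins !eqxx.
apply/idP/idP => H; apply: connect_trans H (connect1 _) => //.
by rewrite kempe_sym.
Qed.

Lemma card_colour_nbhd_le1 c x g : proper M c ->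
  #|[set y | [exists e in M, (c e == g) && joins e x y]]| <= 1.
Proof.
move=> cp; apply/card_le1_eqP => y1 y2; rewrite !inE.
move=> /existsP[e1 /andP[e1M /andP[/eqP c1 j1]]].
move=> /existsP[e2 /andP[e2M /andP[/eqP c2 j2]]].
have ee : e1 = e2.
  apply: (proper_incident_inj cp e1M e2M (joins_incident j1) (joins_incident j2)).
  by rewrite c1 c2.
by subst e2; rewrite (joins_inj j1 j2).
Qed.

Lemma kempe_nbhd_sub c a b x : [set y | kempe c a b x y] \subset
  [set y | [exists e in M, (c e == a) && joins e x y]] :|:
  [set y | [exists e in M, (c e == b) && joins e x y]].
Proof.
apply/subsetP => y; rewrite !inE => /existsP[e /andP[eM /andP[/orP[ca|cb] j]]].
  by apply/orP; left; apply/existsP; exists e; rewrite eM ca.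
by apply/orP; right; apply/existsP; exists e; rewrite eM cb.
Qed.

Lemma card_kempe_nbhd_le2 c a b x : proper M c -> #|[set y | kempe c a b x y]| <= 2.
Proof.
move=> cp; apply: leq_trans (subset_leq_card (kempe_nbhd_sub c a b x)) _.
apply: leq_trans (leq_card_setU _ _) _.
by rewrite -[2]/(1 + 1); apply: leq_add; apply: card_colour_nbhd_le1.
Qed.

Lemma card_kempe_nbhd_missing c a b x g : proper M c -> (g == a) || (g == b) ->
  g \in missing c x -> #|[set y | kempe c a b x y]| <= 1.
Proof.
move=> cp gab /missingP gx.
have no_g h : h = g -> [set y | [exists e in M, (c e == h) && joins e x y]] = set0.
  move=> ->; apply/setP => y; rewrite !inE; apply/negbTE/negP.
  move=> /existsP[e /andP[eM /andP[ce j]]].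
  by move: (gx e eM (joins_incident j)); rewrite ce.
apply: leq_trans (subset_leq_card (kempe_nbhd_sub c a b x)) _.
case/orP: gab => /eqP gab; subst g.
  by rewrite no_g // set0U; apply: card_colour_nbhd_le1.
by rewrite (no_g b) // setU0; apply: card_colour_nbhd_le1.
Qed.

(* A Kempe chain is a path or a cycle, and a vertex missing a or b is one of
   its ends. *)
Lemma kempe_no_three_ends c a b x y z : proper M c ->
  x != y -> x != z -> y != z ->
  [exists g in missing c x, (g == a) || (g == b)] ->
  [exists g in missing c y, (g == a) || (g == b)] ->
  [exists g in missing c z, (g == a) || (g == b)] ->
  connect (kempe c a b) x y -> connect (kempe c a b) x z -> False.
Proof.
move=> cp xy xz yz /exists_inP[gx gx1 gx2] /exists_inP[gy gy1 gy2]
  /exists_inP[gz gz1 gz2] cxy cxz.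
have on_setT : rel_on (kempe c a b) [set: V] =2 kempe c a b.
  by move=> p q; rewrite /rel_on /= !in_setT.
have nbhd_setT p : nbhd_on (kempe c a b) [set: V] p = [set q | kempe c a b p q].
  by apply/setP => q; rewrite !inE.
apply: (@no_three_ends_connected _ _ (@kempe_sym c a b) [set: V] x y z);
  rewrite ?in_setT ?nbhd_setT ?(eq_connect on_setT) //.
- by move=> p _; rewrite nbhd_setT; apply: card_kempe_nbhd_le2.
- exact: (card_kempe_nbhd_missing cp gx2).
- exact: (card_kempe_nbhd_missing cp gy2).
- exact: (card_kempe_nbhd_missing cp gz2).
Qed.

Definition swap_colour a b (g : 'I_k) := if g == a then b else if g == b then a else g.

Lemma swap_colourK a b : involutive (swap_colour a b).
Proof.
move=> g; rewrite /swap_colour; case: (eqVneq g a) => [->|ga] /=.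
  by case: (eqVneq b a) => [->|]; rewrite ?eqxx.
case: (eqVneq g b) => [->|gb] /=; first by rewrite eqxx.
by rewrite (negbTE ga) (negbTE gb).
Qed.

Lemma swap_colour_id a b g : g != a -> g != b -> swap_colour a b g = g.
Proof. by move=> ga gb; rewrite /swap_colour (negbTE ga) (negbTE gb). Qed.

Lemma swap_colour_ab a b g :
  (swap_colour a b g == a) || (swap_colour a b g == b) = (g == a) || (g == b).
Proof.
rewrite /swap_colour; case: (eqVneq g a) => [_|ga].
  by case: (eqVneq b a) => [->|_]; rewrite eqxx ?orbT.
case: (eqVneq g b) => [_|gb]; first by rewrite eqxx.
by rewrite (negbTE ga) (negbTE gb).
Qed.

Definition kempe_swap (c : E -> 'I_k) a b (C : {set V}) :=
  fun e => if (e \in M) && (src e \in C) then swap_colour a b (c e) else c e.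

Section KempeSwap.
Variables (c : E -> 'I_k) (a b : 'I_k) (C : {set V}).
Hypothesis cp : proper M c.
Hypothesis C_closed : forall e, e \in M -> (c e == a) || (c e == b) ->
  (src e \in C) = (dst e \in C).

Local Notation c' := (kempe_swap c a b C).

Lemma kempe_incident_in f x : f \in M -> (c f == a) || (c f == b) -> inc x f ->
  (x \in C) = (src f \in C).
Proof.
by move=> fM fab /orP[/eqP <-//|/eqP <-]; rewrite (C_closed fM fab).
Qed.

Lemma kempe_swap_proper : proper M c'.
Proof.
move=> f1 f2 f1M f2M f12 adj; have := cp f1M f2M f12 adj.
move: adj => /existsP[x /andP[x1 x2]].
rewrite /kempe_swap f1M f2M /=.
(* an edge inside C and an edge leaving it at x cannot both be coloured a/b *)
have border g1 g2 : g1 \in M -> g2 \in M -> inc x g1 -> inc x g2 ->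
    src g1 \in C -> src g2 \notin C -> swap_colour a b (c g1) != c g2.
  move=> g1M g2M xg1 xg2 s1 s2.
  case: (boolP ((c g1 == a) || (c g1 == b))) => ab1; last first.
    rewrite negb_or in ab1; case/andP: ab1 => h1 h2; rewrite swap_colour_id //.
    apply: (cp g1M g2M) => //; last by apply/existsP; exists x; rewrite xg1 xg2.
    by apply: contraNneq s2 => e; rewrite -e.
  have xC : x \in C by rewrite (kempe_incident_in g1M ab1 xg1).
  case: (boolP ((c g2 == a) || (c g2 == b))) => ab2.
    by move: s2; rewrite -(kempe_incident_in g2M ab2 xg2) xC.
  by apply: contraNneq ab2 => <-; rewrite swap_colour_ab.
case: (boolP (src f1 \in C)) => s1; case: (boolP (src f2 \in C)) => s2 /= ne.
- by apply: contraNneq ne => /(can_inj (swap_colourK a b)) ->.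
- exact: border.
- by rewrite eq_sym; apply: border => //; rewrite eq_sym.
- exact: ne.
Qed.

Lemma kempe_swap_out x f : x \notin C -> inc x f -> c' f = c f.
Proof.
move=> xC xf; rewrite /kempe_swap; case: (boolP (f \in M)) => //= fM.
case: ifP => // sC.
case: (boolP ((c f == a) || (c f == b))) => ab.
  by move: xC; rewrite (kempe_incident_in fM ab xf) sC.
by rewrite negb_or in ab; case/andP: ab => h1 h2; rewrite swap_colour_id.
Qed.

Lemma kempe_swap_missing_out x d : x \notin C -> d \in missing c x -> d \in missing c' x.
Proof.
move=> xC /missingP dx; apply/missingP => f fM xf.
by rewrite (kempe_swap_out xC xf); apply: dx.
Qed.

Lemma kempe_swap_missing_other x d : d != a -> d != b ->
  d \in missing c x -> d \in missing c' x.
Proof.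
move=> da db /missingP dx; apply/missingP => f fM xf; rewrite /kempe_swap fM /=.
case: ifP => _; last exact: dx.
apply: contraNneq (dx f fM xf) => e.
by rewrite -(swap_colourK a b (c f)) e swap_colour_id.
Qed.

Lemma kempe_swap_missing_in x : a != b -> x \in C ->
  b \in missing c x -> a \in missing c' x.
Proof.
move=> ab xC /missingP bx; apply/missingP => f fM xf; rewrite /kempe_swap fM /=.
case: ifP => sC.
  rewrite /swap_colour; case: (eqVneq (c f) a) => [_|fa]; first by rewrite eq_sym.
  case: (eqVneq (c f) b) => [fb|//]; by move: (bx f fM xf); rewrite fb eqxx.
by apply: contraFneq sC => fa; rewrite -(kempe_incident_in fM _ xf) ?fa ?eqxx.
Qed.

End KempeSwap.

End Colourings.

Section Star.
Variables (V E : finType) (src dst : E -> V) (k : nat).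
Hypothesis Hloop : loopless src dst.
Variables (M : {set E}) (v : V).

Local Notation inc := (incident src dst).
Local Notation proper := (@proper_edge_coloring V E src dst k).
Local Notation missing := (missing src dst M).

(* Only meaningful for edges incident to v. *)
Definition far_end e := if src e == v then dst e else src e.

Lemma incident_far_end e x : inc v e -> inc x e = (x == v) || (x == far_end e).
Proof.
rewrite /incident /far_end; case: (eqVneq (src e) v) => [->|sv] /=.
  by rewrite (eq_sym v x) (eq_sym (dst e)).
by move=> /eqP dv; rewrite dv orbC !(eq_sym x).
Qed.

Lemma far_end_neq e : inc v e -> far_end e != v.
Proof.
move: (Hloop e); rewrite /incident /far_end.
by case: (eqVneq (src e) v) => [->|sv] /= => [H _|H /eqP <-]; rewrite // eq_sym.
Qed.

Lemma joins_far_end w :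
  [set e | joins src dst e v w] = [set e | inc v e && (far_end e == w)].
Proof.
apply/setP => e; rewrite !inE /joins /incident /far_end.
case: (eqVneq (src e) v) => [sv|sv] /=; last by rewrite andbC.
by have := Hloop e; rewrite sv => dv; rewrite (eq_sym (dst e) v) (negbTE dv) andbF orbF.
Qed.

Lemma sum_mult_far_end (X : {set V}) :
  \sum_(w in X) mult src dst v w = \sum_e (inc v e && (far_end e \in X)).
Proof.
rewrite /mult; under eq_bigr => w _ do rewrite -/(joins _ _ _ _ _) joins_far_end card_sum_mem.
rewrite exchange_big /=; apply: eq_bigr => e _; under eq_bigr => w _ do rewrite inE.
case: (inc v e) => /=; last by rewrite big1.
rewrite (eq_bigr (fun w => (w == far_end e) : nat)); last by move=> w _; rewrite eq_sym.
rewrite big_mkcond /= (bigD1 (far_end e)) //= eqxx big1 ?addn0; first by case: (_ \in X).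
by move=> w /negbTE ->; case: (w \in X).
Qed.

Section Counting.
Variables (c : E -> 'I_k) (F S : {set V}).
Hypothesis S_F : S \subset F.
Hypothesis S_missing_center :
  forall y g, y \in S -> g \in missing c y -> g \notin missing c v.
Hypothesis S_missing_disjoint : forall y1 y2 g, y1 \in S -> y2 \in S -> y1 != y2 ->
  g \in missing c y1 -> g \in missing c y2 -> False.
Hypothesis S_uncoloured :
  forall e, inc v e -> e \notin M -> far_end e \in F -> far_end e \in S.
Hypothesis S_closed : forall g y, g \in M -> inc v g -> far_end g \in F -> y \in S ->
  c g \in missing c y -> far_end g \in S.

Let T := [set e in M | inc v e && ((far_end e \in S) || (far_end e \notin F))].

(* c maps T onto a superset of the colours missing at S, and these colours are
   missing at a single vertex of S each. *)
Lemma sum_card_missing_le : \sum_(y in S) #|missing c y| <= #|T|.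
Proof.
under eq_bigr => y _ do rewrite card_sum_mem.
rewrite exchange_big /=; apply: leq_trans (leq_imset_card c T).
rewrite -sum1_card [X in _ <= X]big_mkcond /=; apply: leq_sum => g _.
have -> : \sum_(y in S) (g \in missing c y) = #|[set y in S | g \in missing c y]|.
  by rewrite card_sum_mem big_mkcond; apply: eq_bigr => y _; rewrite inE; case: (y \in S).
have [/eqP->|/set0Pn[y0]] := boolP ([set y in S | g \in missing c y] == set0).
  by rewrite cards0.
rewrite inE => /andP[y0S gy0].
have -> : g \in c @: T.
  have := S_missing_center y0S gy0; rewrite inE negb_forall_in => /exists_inP[e eM].
  rewrite negb_imply negbK => /andP[ve /eqP ce].
  apply/imsetP; exists e => //; rewrite inE eM ve /=.
  case: (boolP (far_end e \in F)) => eF; rewrite ?orbT //.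
  by rewrite (S_closed eM ve eF y0S) // ce.
apply/card_le1_eqP => y1 y2; rewrite [y1 \in _]inE [y2 \in _]inE.
move=> /andP[y1S g1] /andP[y2S g2].
by apply/eqP; apply: contraT => ne; case: (S_missing_disjoint y2S y1S ne g2 g1).
Qed.

Lemma sum_mult_le_degM : (forall y, y \in F -> mult src dst v y <= #|missing c y|) ->
  \sum_(w in F) mult src dst v w <= degM src dst M v.
Proof.
move=> mult_le_missing.
pose FS e := [&& e \in M, inc v e, far_end e \in F & far_end e \notin S].
have sum_S : \sum_(y in S) mult src dst v y <= #|T|.
  apply: leq_trans sum_card_missing_le; apply: leq_sum => y yS.
  exact/mult_le_missing/(subsetP S_F).
apply: (@leq_trans (\sum_e ((inc v e && (far_end e \in S)) + FS e))).
  rewrite sum_mult_far_end; apply: leq_sum => e _; rewrite /FS.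
  case: (boolP (inc v e)) => //= ve.
  case: (boolP (far_end e \in S)) => eS /=; first exact: leq_trans (leq_b1 _) (leq_addr _ _).
  case: (boolP (far_end e \in F)) => //= eF; case: (boolP (e \in M)) => //= eM.
  by move: eS; rewrite (S_uncoloured ve eM eF).
rewrite big_split /= -sum_mult_far_end.
apply: (@leq_trans (#|T| + \sum_e FS e)); first by rewrite leq_add2r.
rewrite /degM !card_sum_mem -big_split /=; apply: leq_sum => e _; rewrite /FS !inE.
case: (e \in M) (inc v e) => [] [] //=.
by case: (boolP (far_end e \in S)) => [/(subsetP S_F)->|]; case: (_ \in F).
Qed.

End Counting.

Definition recolour (c : E -> 'I_k) e g := fun x => if x == e then g else c x.

Lemma recolour_proper c e g : proper M c -> inc v e ->
  g \in missing c v -> g \in missing c (far_end e) -> proper (e |: M) (recolour c e g).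
Proof.
move=> cp ve /missingP gv /missingP ge.
have g_new f x : f \in M -> f != e -> inc x e -> inc x f -> g != c f.
  move=> fM fe xe xf; rewrite eq_sym.
  by move: xe; rewrite incident_far_end // => /orP[] /eqP xe; [apply: gv | apply: ge];
    rewrite // -xe.
move=> f1 f2; rewrite !inE /recolour.
move=> /orP[/eqP->|f1M] /orP[/eqP->|f2M] f12 /existsP[x /andP[x1 x2]].
- by rewrite eqxx in f12.
- rewrite eqxx; case: (eqVneq f2 e) => [e2|e2]; first by rewrite e2 eqxx in f12.
  exact: (g_new f2 x).
- rewrite eqxx; case: (eqVneq f1 e) => [e1|e1]; first by rewrite e1 eqxx in f12.
  by rewrite eq_sym; exact: (g_new f1 x).
- case: (eqVneq f1 e) => [e1|e1]; case: (eqVneq f2 e) => [e2|e2].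
  + by rewrite e1 e2 eqxx in f12.
  + by subst f1; exact: (g_new f2 x).
  + by subst f2; rewrite eq_sym; exact: (g_new f1 x).
  + by apply: cp => //; apply/existsP; exists x; rewrite x1 x2.
Qed.

Lemma recolour_missing c e g x d : d \in missing c x -> d != g ->
  d \in missing (recolour c e g) x.
Proof.
move=> /missingP dx dg; apply/missingP => f fM xf; rewrite /recolour.
by case: (eqVneq f e) => _; [rewrite eq_sym | apply: dx].
Qed.

(* Fans are listed from their last edge to their first one. *)
Fixpoint fan (c : E -> 'I_k) (R : seq E) : Prop :=
  if R is e :: R' then
    [/\ fan c R', e \notin R', inc v e &
        e \notin M \/ exists2 h, h \in R' & c e \in missing c (far_end h)]
  else True.

Lemma fan_suffix c A B : fan c (A ++ B) -> fan c B.
Proof. by elim: A => [//|a A IH] /= [/IH]. Qed.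

Lemma fan_incident c R g : fan c R -> g \in R -> inc v g.
Proof.
elim: R => [//|e R IH] /= [fR _ ve _]; rewrite in_cons => /orP[/eqP->//|]; exact: IH.
Qed.

Lemma mem_behead_cat (x : E) L R1 g R2 : x :: L = R1 ++ g :: R2 -> {subset R2 <= L}.
Proof.
case: R1 => [|y R1'] /= [_ ->] z zR2 //.
by rewrite mem_cat in_cons zR2 !orbT.
Qed.

Lemma fan_change_colouring c c' R : fan c R -> {in R, c' =1 c} ->
  (forall R1 g R2 h, R = R1 ++ g :: R2 -> h \in R2 -> g \in M ->
     c g \in missing c (far_end h) -> c g \in missing c' (far_end h)) ->
  fan c' R.
Proof.
elim: R => [//|e R IH] /= [fR eR ve W] c'c keep; split => //.
- apply: IH => // [g gR|R1 g R2 h eq hR2 gM hg]; first by apply: c'c; rewrite in_cons gR orbT.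
  by apply: (keep (e :: R1) g R2 h) => //; rewrite eq.
- case: (boolP (e \in M)) => eM; last by left.
  case: W => [|[h hR he]]; first by rewrite eM.
  right; exists h => //.
  by rewrite c'c ?mem_head //; apply: (keep [::] e R h).
Qed.

Lemma fan_merge c R1 R2 : fan c R1 -> fan c R2 -> fan c ([seq g <- R1 | g \notin R2] ++ R2).
Proof.
elim: R1 => [//|g R1 IH] /= [f1 gR1 vg W] f2.
case: (boolP (g \in R2)) => gR2 /=; first exact: IH.
split => //; first exact: IH.
- by rewrite mem_cat mem_filter (negbTE gR2) (negbTE gR1).
- case: W => [W|[h hR hg]]; [by left|right]; exists h => //.
  by rewrite mem_cat mem_filter; case: (h \in R2); rewrite ?orbT ?hR.
Qed.

Hypothesis Hmax : forall e, e \notin M -> ~ k_edge_colorable src dst k (e |: M).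

(* Shifting colours down the fan: give e the colour g and pass the old colour
   of e on to the fan starting at h. *)
Lemma fan_missing_center c R e g : proper M c -> fan c (e :: R) ->
  g \in missing c (far_end e) -> g \notin missing c v.
Proof.
have [n] := ubnP (size R); elim: n c R e g => [//|n IH] c R e g sR cp /= [fR eR ve W] ge.
apply/negP => gv.
have [eM|[h hR he]] := W.
  by apply: (Hmax eM); exists (recolour c e g); exact: recolour_proper.
have [eM|eM] := boolP (e \in M); last first.
  by apply: (Hmax eM); exists (recolour c e g); exact: recolour_proper.
have ceg : c e != g by move/missingP: gv => /(_ e eM ve).
case/splitPr: hR sR fR eR => A B sR fR eR.
have fB : fan c (h :: B) by apply: (fan_suffix fR).
have cp' : proper M (recolour c e g).
  apply: proper_edge_coloringS (recolour_proper cp ve gv ge).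
  by apply/subsetP => x xM; rewrite !inE xM orbT.
apply: (negP (IH (recolour c e g) B h (c e) _ cp' _ _)).
- by move: sR; rewrite size_cat /= addnS ltnS; apply: leq_trans; apply: leq_addl.
- apply: (fan_change_colouring fB) => [x xB|R1 x R2 h' eq h'R2 xM hx].
    rewrite /recolour; case: (eqVneq x e) => // xe; move: eR; rewrite -xe mem_cat.
    by rewrite xB orbT.
  apply: recolour_missing => //.
  have xB : x \in h :: B by rewrite eq mem_cat mem_head orbT.
  by move/missingP: gv => /(_ x xM (fan_incident fB xB)); rewrite eq_sym.
- apply/missingP => f fM xf; rewrite /recolour; case: (eqVneq f e) => [fe|fe].
    by subst f; move/missingP: he => /(_ e eM xf); rewrite eqxx.
  by move/missingP: he; apply.
- apply/missingP => f fM vf; rewrite /recolour.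
  case: (eqVneq f e) => [_|fe]; first by rewrite eq_sym.
  apply/negP => /eqP cf.
  by move: fe; rewrite (proper_incident_inj cp fM eM vf ve cf) eqxx.
Qed.

Lemma kempe_swap_fan c a b (C : {set V}) R : a \in missing c v ->
  (forall e, e \in M -> (c e == a) || (c e == b) -> (src e \in C) = (dst e \in C)) ->
  v \notin C -> fan c R ->
  (forall h, h \in behead R -> b \in missing c (far_end h) -> far_end h \notin C) ->
  fan (kempe_swap src M c a b C) R.
Proof.
move=> av C_closed vC fR bC.
apply: (fan_change_colouring fR) => [g gR|R1 g R2 h RE hR2 gM hg].
  exact: (kempe_swap_out C_closed vC (fan_incident fR gR)).
have vg : inc v g by apply: (fan_incident fR); rewrite RE mem_cat mem_head orbT.
have cga : c g != a by move/missingP: av => /(_ g gM vg).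
case: (eqVneq (c g) b) => cgb; last exact: kempe_swap_missing_other.
apply: (kempe_swap_missing_out C_closed) => //; apply: bC; last by rewrite -cgb.
by case: R RE {fR} => [|x L] RE; [case: R1 RE | exact: (mem_behead_cat RE hR2)].
Qed.

Lemma fan_missing_disjoint c a R : proper M c -> a \in missing c v -> fan c R ->
  forall g1 g2 b, g1 \in R -> g2 \in R -> far_end g1 != far_end g2 ->
  b \in missing c (far_end g1) -> b \in missing c (far_end g2) -> False.
Proof.
move=> cp av; elim: R => [//|e R IH] /= [fR eR ve W].
have {}IH := IH fR.
suff head_disjoint f b : f \in R -> far_end f != far_end e ->
    b \in missing c (far_end f) -> b \in missing c (far_end e) -> False.
  move=> g1 g2 b; rewrite !in_cons => /orP[/eqP->|g1R] /orP[/eqP->|g2R].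
  - by rewrite eqxx.
  - by move=> ne b1 b2; apply: (head_disjoint g2 b g2R) => //; rewrite eq_sym.
  - by move=> ne b1 b2; apply: (head_disjoint g1 b g1R).
  - exact: IH.
move=> fR' ne bf be.
have [A [f' [B [RAB /eqP ff' Bf]]]] :=
  @last_occurrence _ (fun g => far_end g == far_end f) R f fR' (eqxx _).
have fB : fan c (f' :: B) by apply: (@fan_suffix c A); rewrite -RAB.
have bv : b \notin missing c v by apply: (fan_missing_center cp fB); rewrite ff'.
have ab : a != b by apply: contraNneq bv => <-.
have vf : v != far_end f by rewrite eq_sym far_end_neq // (fan_incident fR fR').
have ve' : v != far_end e by rewrite eq_sym far_end_neq.
have end_a : [exists g in missing c v, (g == a) || (g == b)].
  by apply/exists_inP; exists a; rewrite ?eqxx.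
have end_f : [exists g in missing c (far_end f), (g == a) || (g == b)].
  by apply/exists_inP; exists b; rewrite ?eqxx ?orbT.
have end_e : [exists g in missing c (far_end e), (g == a) || (g == b)].
  by apply/exists_inP; exists b; rewrite ?eqxx ?orbT.
have kempe_cs := sym_connect_sym (kempe_sym src dst M c a b).
(* swap a and b on the Kempe chain of far_end e or of far_end f, whichever
   avoids v; then a is missing at v and at the far end of a fan *)
have [cvf|ncvf] := boolP (connect (kempe src dst M c a b) v (far_end f)).
- pose C := kempe_comp src dst M c a b (far_end e).
  have C_closed := @kempe_comp_closed _ _ src dst k M c a b (far_end e).
  have vC : v \notin C.
    rewrite inE kempe_cs; apply/negP => cve.
    exact: (kempe_no_three_ends cp vf ve' ne end_a end_f end_e cvf cve).
  have fC : far_end f \notin C.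
    by apply: contra vC; rewrite !inE => cef; apply: connect_trans cef _; rewrite kempe_cs.
  apply: (negP (fan_missing_center (kempe_swap_proper cp C_closed) (R := R) (e := e) _ _))
    (kempe_swap_missing_out C_closed vC av).
  + apply: kempe_swap_fan => //= h hR bh; have [->//|nh] := eqVneq (far_end h) (far_end f).
    by case: (IH h f b hR fR' nh).
  + by apply: (kempe_swap_missing_in C_closed ab _ be); rewrite inE connect0.
- pose C := kempe_comp src dst M c a b (far_end f).
  have C_closed := @kempe_comp_closed _ _ src dst k M c a b (far_end f).
  have vC : v \notin C by rewrite inE kempe_cs.
  apply: (negP (fan_missing_center (kempe_swap_proper cp C_closed) (R := B) (e := f') _ _))
    (kempe_swap_missing_out C_closed vC av).
  + apply: kempe_swap_fan => // h hB bh; exfalso.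
    have hR : h \in R by rewrite RAB mem_cat in_cons hB !orbT.
    by apply: (IH h f b hR fR') => //; move/allP: Bf => /(_ h hB).
  + by rewrite ff'; apply: (kempe_swap_missing_in C_closed ab _ bf); rewrite inE connect0.
Qed.

Definition fan_ends c (F : {set V}) := [set y | asbool (exists e R,
  [/\ fan c (e :: R), all (fun g => far_end g \in F) (e :: R) & far_end e = y])].

Section FanEnds.
Variables (c : E -> 'I_k) (F : {set V}).
Hypothesis cp : proper M c.

Lemma fan_ends_subset : fan_ends c F \subset F.
Proof. by apply/subsetP => y; rewrite inE => /asboolP [e [R [_ /= /andP[eF _] <-]]]. Qed.

Lemma fan_ends_missing_center y g :
  y \in fan_ends c F -> g \in missing c y -> g \notin missing c v.
Proof. by rewrite inE => /asboolP [e [R [fe _ <-]]]; apply: fan_missing_center cp fe. Qed.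

Lemma fan_ends_missing_disjoint a y1 y2 g : a \in missing c v ->
  y1 \in fan_ends c F -> y2 \in fan_ends c F -> y1 != y2 ->
  g \in missing c y1 -> g \in missing c y2 -> False.
Proof.
move=> av + + ne g1 g2; rewrite !inE.
move=> /asboolP [e1 [R1 [f1 _ ?]]] /asboolP [e2 [R2 [f2 _ ?]]]; subst y1 y2.
apply: (fan_missing_disjoint cp av (fan_merge f1 f2) _ _ ne g1 g2).
  rewrite mem_cat; apply/orP; have [|e12] := boolP (e1 \in e2 :: R2); first by right.
  by left; rewrite mem_filter e12 mem_head.
by rewrite mem_cat mem_head orbT.
Qed.

Lemma fan_ends_uncoloured e : inc v e -> e \notin M -> far_end e \in F ->
  far_end e \in fan_ends c F.
Proof.
move=> ve eM eF; rewrite inE; apply/asboolP; exists e, [::].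
by split; [split => //; left | rewrite /= eF andbT |].
Qed.

Lemma fan_ends_closed g y : g \in M -> inc v g -> far_end g \in F ->
  y \in fan_ends c F -> c g \in missing c y -> far_end g \in fan_ends c F.
Proof.
move=> gM vg gF + eg; rewrite inE => /asboolP [e [R [fe RF ey]]]; subst y.
rewrite inE; apply/asboolP.
have [gR|gR] := boolP (g \in e :: R).
  move: fe RF; case/splitPr: gR => A B fAB ABF.
  exists g, B; split => //; first exact: (fan_suffix fAB).
  by move: ABF; rewrite all_cat => /andP[].
exists g, (e :: R); split => //=; last by rewrite gF.
by split => //; right; exists e; rewrite ?mem_head.
Qed.

End FanEnds.

Lemma degF_le_degM_of_missing c (F : {set V}) a : proper M c -> a \in missing c v ->
  (forall y, y \in F -> mult src dst v y <= #|missing c y|) ->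
  \sum_(w in F) mult src dst v w <= degM src dst M v.
Proof.
move=> cp av; apply: (sum_mult_le_degM (S := fan_ends c F)).
- exact: fan_ends_subset.
- exact: fan_ends_missing_center cp.
- by move=> y1 y2 g; apply: (fan_ends_missing_disjoint cp av).
- exact: fan_ends_uncoloured.
- exact: fan_ends_closed.
Qed.

End Star.

Theorem mainTheorem1 (V E : finType) (src dst : E -> V) (k : nat)
  (Hloop : loopless src dst) (Hk : 1 <= k) (M : {set E})
  (HM : maximal_k_edge_colorable src dst k M) :
  let F := [set v : V | degM src dst M v + mult_max src dst v <= k] in
  forall v : V, degM src dst M v < k -> degF src dst F v <= degM src dst M v.
Proof.
move=> F v dv; case: HM => [[c cp] maxM].
have Hmax e : e \notin M -> ~ k_edge_colorable src dst k (e |: M).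
  by move=> eM; apply: maxM; rewrite properUr // sub1set.
have [a av] : exists a, a \in missing src dst M c v.
  apply/set0Pn; rewrite -card_gt0; apply: leq_trans (card_missing src dst M c v).
  by rewrite subn_gt0.
apply: (degF_le_degM_of_missing Hloop Hmax cp av) => y; rewrite inE => yF.
apply: leq_trans (card_missing src dst M c y).
rewrite leq_subRL; last exact: leq_trans (leq_addr _ _) yF.
by apply: leq_trans yF; rewrite leq_add2l multC leq_mult_max.
Qed.
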